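(* The horizontal monoidal category $H(\mathsf{sInst})$ of the double category of simplicial instruments can be identified with the monoidal category $(\mathsf{Chan},\otimes,\mathbb C)$ of finite-dimensional Hilbert spaces and channels, via the identification of simplicial instruments $\Delta^0\to\mathcal{CP}_{V,W}(\Delta^0)$ with channels $V\to W$; and the vertical monoidal category $V(\mathsf{sInst})$ can be identified with the Kleisli category $\mathsf{sSet}_D$ of the levelwise distribution monad on simplicial sets (with monoidal product given on objects by the product of simplicial sets), via the identification $\mathcal{CP}_{\mathbb C,\mathbb C}(Y)\cong D(Y)$ induced by $\operatorname{CP}(\mathbb C,\mathbb C)\cong\mathbb R_{\ge0}$.
   Context: All Hilbert spaces are finite-dimensional; $\operatorname{CP}(V,W)$ denotes completely positive maps $L(V)\to L(W)$ and channels are trace-preserving ones. For a set $S$, $\mathcal{CP}_{V,W}(S)$ is the set of finitely supported $\Phi:S\to\operatorname{CP}(V,W)$ with $\sum_s\Phi^s$ a channel, functorial in $S$ by $(f_*\Phi)^t=\sum_{f(s)=t}\Phi^s$; it is extended levelwise to simplicial sets. A simplicial instrument is a simplicial map $\Phi:X\to\mathcal{CP}_{V,W}(Y)$. The double category $\mathsf{sInst}$ has one object, vertical morphisms Hilbert spaces, horizontal morphisms simplicial sets, and squares (with horizontal boundaries $X$ above, $Y$ below, vertical boundaries $V$, $W$) the simplicial instruments $X\to\mathcal{CP}_{V,W}(Y)$. Horizontal composition: for $\Phi:X_1\to\mathcal{CP}_{V,W}(Y_1)$, $\Psi:X_2\to\mathcal{CP}_{W,U}(Y_2)$, $(\Psi\circ\Phi)_{(x_1,x_2)}^{(y_1,y_2)}=\Psi_{x_2}^{y_2}\circ\Phi_{x_1}^{y_1}$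 on $X_1\times X_2\to\mathcal{CP}_{V,U}(Y_1\times Y_2)$. Vertical composition: for $\Phi:X\to\mathcal{CP}_{V_1,W_1}(Y)$, $\Psi:Y\to\mathcal{CP}_{V_2,W_2}(Z)$, $(\Psi\bullet\Phi)_x^z=\sum_{y\in Y_n}\Phi_x^y\otimes\Psi_y^z$. The horizontal identity is the terminal simplicial set $\Delta^0$ (one simplex in each degree), and the vertical identity is $\mathbb C$. The horizontal monoidal category $H(\mathsf{sInst})$ has objects the Hilbert spaces, morphisms $V\to W$ the squares with both horizontal boundaries $\Delta^0$, composition by horizontal composition and tensor product by vertical composition. The vertical monoidal category $V(\mathsf{sInst})$ has objects simplicial sets, morphisms $X\to Y$ the squares with both vertical boundaries $\mathbb C$, composition by vertical composition and tensor product by horizontal composition. $D$ is the distribution monad ($D(S)$ = finitely supported probability distributions on $S$) applied levelwise to simplicial sets; $\mathsf{sSet}_D$ is its Kleisli category, with objects simplicial sets and morphisms simplicial maps $X\to D(Y)$. *)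

From HB Require Import structures.
From mathcomp Require Import all_boot all_order all_algebra.
From mathcomp Require Import functions.
From mathcomp Require Import complex.
From mathcomp Require Import reals.
From Stdlib Require Import ClassicalEpsilon.

Set Implicit Arguments.
Unset Strict Implicit.
Unset Printing Implicit Defensive.

Import Order.TTheory GRing.Theory Num.Theory.
Local Open Scope ring_scope.

Section FinSupp.
Variables (S : eqType) (V : nmodType).

Definition supp_list (F : S -> V) (r : seq S) :=
  uniq r /\ forall s, s \notin r -> F s = 0.

Definition finsupp (F : S -> V) := exists r, supp_list F r.

(* sum of a finitely supported family (junk value if F is not
   finitely supported) *)
Definition fsum (F : S -> V) : V :=
  \sum_(s <- epsilon (inhabits [::]) (supp_list F)) F s.

End FinSupp.

Definition push (S T : eqType) (V : nmodType) (f : S -> T) (F : S -> V) : T -> V :=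
  fun t => fsum (fun s => if f s == t then F s else 0).

(* Simplicial sets.  Faces d_i : X_{n+1} -> X_n (i <= n+1) and          *)
(* degeneracies s_i : X_n -> X_{n+1} (i <= n); out-of-range indices     *)
(* are unconstrained junk.                                              *)
Record sSet := SSet {
  lvl :> nat -> eqType;
  face : forall n, nat -> lvl n.+1 -> lvl n;
  degen : forall n, nat -> lvl n -> lvl n.+1;
  face_face : forall n i j (x : lvl n.+2), (i < j)%N -> (j <= n.+2)%N ->
    face i (face j x) = face j.-1 (face i x);
  face_degen_lt : forall n i j (x : lvl n.+1), (i < j)%N -> (j <= n.+1)%N ->
    face i (degen j x) = degen j.-1 (face i x);
  face_degen_eq : forall n j (x : lvl n), (j <= n)%N ->
    face j (degen j x) = x;
  face_degen_eqS : forall n j (x : lvl n), (j <= n)%N ->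
    face j.+1 (degen j x) = x;
  face_degen_gt : forall n i j (x : lvl n.+1), (j.+1 < i)%N -> (i <= n.+2)%N ->
    face i (degen j x) = degen j (face i.-1 x);
  degen_degen : forall n i j (x : lvl n), (i <= j)%N -> (j <= n)%N ->
    degen i (degen j x) = degen j.+1 (degen i x)
}.
Arguments face : clear implicits.
Arguments degen : clear implicits.

Definition Delta0 : sSet :=
  @SSet (fun _ => unit) (fun _ _ _ => tt) (fun _ _ _ => tt)
    (fun _ _ _ _ _ _ => erefl) (fun _ _ _ _ _ _ => erefl)
    (fun _ _ x _ => match x with tt => erefl end)
    (fun _ _ x _ => match x with tt => erefl end)
    (fun _ _ _ _ _ _ => erefl) (fun _ _ _ _ _ _ => erefl).

Section Prod.
Variables X Y : sSet.
Definition prod_lvl (n : nat) : eqType := (X n * Y n)%type.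
Definition prod_face n i (x : prod_lvl n.+1) : prod_lvl n :=
  (face X n i x.1, face Y n i x.2).
Definition prod_degen n i (x : prod_lvl n) : prod_lvl n.+1 :=
  (degen X n i x.1, degen Y n i x.2).
Definition sProd : sSet.
Proof.
refine (@SSet prod_lvl prod_face prod_degen _ _ _ _ _ _).
- move=> n i j x H1 H2; congr pair; exact: face_face.
- move=> n i j x H1 H2; congr pair; exact: face_degen_lt.
- move=> n j [x y] H; congr pair; exact: face_degen_eq.
- move=> n j [x y] H; congr pair; exact: face_degen_eqS.
- move=> n i j x H1 H2; congr pair; exact: face_degen_gt.
- move=> n i j x H1 H2; congr pair; exact: degen_degen.
Defined.
End Prod.

(* families indexed by simplices: Phi n x y = Phi_x^y for x in X_n, y in Y_n *)
Definition sfam (V : Type) (X Y : sSet) := forall n, X n -> Y n -> V.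

(* Phi : X -> "levelwise finitely supported V-valued families on Y" is a
   simplicial map (the structure maps of the target act by pushforward) *)
Definition simplicial_fam (V : nmodType) (X Y : sSet) (Phi : sfam V X Y) :=
  [/\ forall n (x : X n), finsupp (Phi n x),
      forall n i (x : X n.+1), (i <= n.+1)%N ->
        Phi n (face X n i x) = push (face Y n i) (Phi n.+1 x) &
      forall n i (x : X n), (i <= n)%N ->
        Phi n.+1 (degen X n i x) = push (degen Y n i) (Phi n x)].

(* Finite-dimensional Hilbert spaces (given by an orthonormal basis     *)
(* indexed by a finite type I), operators, CP maps and channels.        *)
Notation Lop C I := (I -> I -> C).

Section Quantum.
Variable C : numClosedFieldType.
Local Notation L I := (Lop C I).

Definition trace (I : finType) (A : L I) : C := \sum_i A i i.

Definition psd (I : finType) (A : L I) :=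
  forall v : I -> C, 0 <= \sum_i \sum_j (v i)^* * A i j * v j.

Definition lin_op (I J : finType) (f : L I -> L J) :=
  forall (a : C) (X Y : L I),
    f (fun i j => a * X i j + Y i j) = (fun i j => a * f X i j + f Y i j).

Definition unit_op (I : finType) (a b : I) : L I :=
  fun k l => ((k == a) && (l == b))%:R.

Definition block (I J : finType) (X : L (I * J)%type) (a b : I) : L J :=
  fun k l => X (a, k) (b, l).

Definition kron (I J : finType) (A : L I) (B : L J) : L (I * J)%type :=
  fun p q => A p.1 q.1 * B p.2 q.2.

(* tensor product f (x) g of linear maps, (f (x) g)(A (x) B) = f A (x) g B *)
Definition tens_map (I I' J J' : finType) (f : L I -> L I') (g : L J -> L J') :
  L (I * J)%type -> L (I' * J')%type :=
  fun X p q => \sum_(a : I) \sum_(b : I) kron (f (unit_op a b)) (g (block X a b)) p q.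

Definition is_cp (I J : finType) (f : L I -> L J) :=
  lin_op f /\
  forall (k : nat) (X : L ('I_k * I)%type), psd X ->
    psd (tens_map (fun Y : L 'I_k => Y) f X).

Definition is_channel (I J : finType) (f : L I -> L J) :=
  is_cp f /\ forall X, trace (f X) = trace X.

Definition sinstr (V W : finType) (X Y : sSet) (Phi : sfam (L V -> L W) X Y) :=
  [/\ simplicial_fam Phi,
      forall n x y, is_cp (Phi n x y) &
      forall n (x : X n), is_channel (fsum (Phi n x))].

Definition hcomp (V W U : finType) (X1 Y1 X2 Y2 : sSet)
  (Phi : sfam (L V -> L W) X1 Y1) (Psi : sfam (L W -> L U) X2 Y2) :
  sfam (L V -> L U) (sProd X1 X2) (sProd Y1 Y2) :=
  fun n x y => Psi n x.2 y.2 \o Phi n x.1 y.1.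

Definition vcomp (V1 W1 V2 W2 : finType) (X Y Z : sSet)
  (Phi : sfam (L V1 -> L W1) X Y) (Psi : sfam (L V2 -> L W2) Y Z) :
  sfam (L (V1 * V2)%type -> L (W1 * W2)%type) X Z :=
  fun n x z => fsum (fun y => tens_map (Phi n x y) (Psi n y z)).

Definition const_sq (V W : finType) (f : L V -> L W) : sfam (L V -> L W) Delta0 Delta0 :=
  fun _ _ _ => f.

(* the identification of a square with horizontal boundaries Delta^0
   (resp. Delta^0 x Delta^0) with a map V -> W *)
Definition ev (V W : finType) (Phi : sfam (L V -> L W) Delta0 Delta0) : L V -> L W :=
  Phi 0%N tt tt.
Definition ev2 (V W : finType)
  (Phi : sfam (L V -> L W) (sProd Delta0 Delta0) (sProd Delta0 Delta0)) : L V -> L W :=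
  Phi 0%N (tt, tt) (tt, tt).

(* vertical identity square on a simplicial set X (vertical boundaries C) *)
Definition vid (X : sSet) : sfam (L unit -> L unit) X X :=
  fun n x y => if x == y then id else (fun _ _ _ => 0).

End Quantum.

Section Kleisli.
Variable R : realType.

Definition kmap (X Y : sSet) (p : sfam R X Y) :=
  [/\ simplicial_fam p,
      forall n x y, 0 <= p n x y &
      forall n (x : X n), fsum (p n x) = 1].

Definition kcomp (X Y Z : sSet) (p : sfam R X Y) (q : sfam R Y Z) : sfam R X Z :=
  fun n x z => fsum (fun y => p n x y * q n y z).

Definition kid (X : sSet) : sfam R X X := fun n x y => (x == y)%:R.

Definition ktens (X1 Y1 X2 Y2 : sSet) (p : sfam R X1 Y1) (q : sfam R X2 Y2) :
  sfam R (sProd X1 X2) (sProd Y1 Y2) :=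
  fun n x y => p n x.1 y.1 * q n x.2 y.2.

(* CP_{C,C}(Y) ~= D(Y) induced by CP(C,C) ~= R_{>=0}, Phi |-> Phi(1) *)
Definition toD (X Y : sSet) (Phi : sfam (Lop R[i] unit -> Lop R[i] unit) X Y) : sfam R X Y :=
  fun n x y => @complex.Re R (Phi n x y (fun _ _ => 1) tt tt).

(* same, for vertical boundaries C (x) C *)
Definition toD2 (X Y : sSet)
  (Phi : sfam (Lop R[i] (unit * unit)%type -> Lop R[i] (unit * unit)%type) X Y) : sfam R X Y :=
  fun n x y => @complex.Re R (Phi n x y (fun _ _ => 1) (tt, tt) (tt, tt)).

Definition fromD (X Y : sSet) (p : sfam R X Y) : sfam (Lop R[i] unit -> Lop R[i] unit) X Y :=
  fun n x y => fun A i j => Complex (p n x y) 0 * A i j.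

End Kleisli.

Arguments const_sq {C V W} f n _ _.
Arguments hcomp {C V W U X1 Y1 X2 Y2} Phi Psi n _ _.
Arguments vcomp {C V1 W1 V2 W2 X Y Z} Phi Psi n _ _.
Arguments vid {C} X n _ _.
Arguments kcomp {R X Y Z} p q n _ _.
Arguments kid : clear implicits.
Arguments ktens {R X1 Y1 X2 Y2} p q n _ _.
Arguments toD {R X Y} Phi n _ _.
Arguments toD2 {R X Y} Phi n _ _.
Arguments fromD {R X Y} p n _ _.

From HB Require Import structures.
From mathcomp Require Import all_boot all_order all_algebra.
From mathcomp Require Import functions complex reals.
From Stdlib Require Import FunctionalExtensionality ClassicalEpsilon.

Set Implicit Arguments.
Unset Strict Implicit.
Unset Printing Implicit Defensive.
Import Order.TTheory GRing.Theory Num.Theory.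
Local Open Scope ring_scope.

(* Delta^0 has one simplex in each degree and its degeneracies are bijections, so a
   simplicial instrument Delta^0 -> CP_{V,W}(Delta^0) is a single channel repeated in
   every degree.  A linear map on L(C) is multiplication by its value at 1, which for a
   CP map is a nonnegative real; hence CP_{C,C}(Y) is the set of finitely supported
   nonnegative weights on Y, the channel condition says that they sum to 1, and both
   composites of squares multiply these weights. *)

Section FiniteSupport.
Variable S : eqType.

Lemma big_supp_list (V : nmodType) (F : S -> V) r t :
  supp_list F r -> uniq t -> {subset r <= t} -> \sum_(s <- t) F s = \sum_(s <- r) F s.
Proof.
case=> r_uniq F_out t_uniq r_t.
rewrite (bigID (mem r)) /= [X in _ + X]big1 ?addr0; last by move=> s /F_out.
rewrite -big_filter; apply/perm_big/uniq_perm; [exact: filter_uniq | exact: r_uniq |].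
by move=> s; rewrite mem_filter; apply/andP/idP => [[]|r_s] //; split=> //; exact: r_t.
Qed.

Lemma fsumE (V : nmodType) (F : S -> V) r : supp_list F r -> fsum F = \sum_(s <- r) F s.
Proof.
move=> Fr; rewrite /fsum; set r' := epsilon _ _.
have Fr' : supp_list F r' by apply: epsilon_spec; exists r.
have sub_l : {subset r' <= undup (r' ++ r)}.
  by move=> s; rewrite mem_undup mem_cat => ->.
have sub_r : {subset r <= undup (r' ++ r)}.
  by move=> s; rewrite mem_undup mem_cat orbC => ->.
by rewrite -(big_supp_list Fr' (undup_uniq _) sub_l) (big_supp_list Fr (undup_uniq _) sub_r).
Qed.

Lemma finsupp_sub (V W : nmodType) (F : S -> V) (G : S -> W) :
  finsupp F -> (forall s, F s = 0 -> G s = 0) -> finsupp G.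
Proof. by move=> [r [r_uniq F_out]] FG; exists r; split=> // s /F_out /FG. Qed.

Lemma fsum_morph (V W : nmodType) (g : V -> W) (F : S -> V) :
  nmod_morphism g -> finsupp F -> fsum (fun s => g (F s)) = g (fsum F).
Proof.
move=> [g0 gD] [r Fr].
have gFr : supp_list (fun s => g (F s)) r by case: Fr => r_uniq F_out; split=> // s /F_out ->.
by rewrite (fsumE Fr) (fsumE gFr) (big_morph g gD g0).
Qed.

Lemma push_morph (T : eqType) (V W : nmodType) (g : V -> W) (f : S -> T) (F : S -> V) t :
  nmod_morphism g -> finsupp F -> push f (fun s => g (F s)) t = g (push f F t).
Proof.
move=> gM FF; rewrite /push -fsum_morph //; last first.
  by apply: finsupp_sub FF _ => s Fs0; case: ifP.
by congr fsum; apply: functional_extensionality => s; case: ifP; rewrite ?gM.1.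
Qed.

End FiniteSupport.

Lemma fsum_unit (V : nmodType) (F : unit -> V) : fsum F = F tt.
Proof. by rewrite (@fsumE _ _ F [:: tt]) ?big_seq1 //; split=> // -[]. Qed.

Lemma sum_unit (V : nmodType) (F : unit -> V) : \sum_(i : unit) F i = F tt.
Proof. by rewrite (bigD1 tt) //= big1 ?addr0 // => -[]. Qed.

Lemma simplicial_fam_morph (V W : nmodType) (g : V -> W) (X Y : sSet) (Phi : sfam V X Y) :
  nmod_morphism g -> simplicial_fam Phi -> simplicial_fam (fun n x y => g (Phi n x y)).
Proof.
move=> gM [Phi_fin Phi_face Phi_degen]; split.
- by move=> n x; apply: finsupp_sub (Phi_fin n x) _ => y ->; rewrite gM.1.
- move=> n i x le_in; apply: functional_extensionality => y.
  by rewrite (push_morph _ _ gM (Phi_fin _ x)) Phi_face.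
- move=> n i x le_in; apply: functional_extensionality => y.
  by rewrite (push_morph _ _ gM (Phi_fin _ x)) Phi_degen.
Qed.

Lemma simplicial_fam_const_Delta0 (V : nmodType) (v : V) :
  simplicial_fam ((fun _ _ _ => v) : sfam V Delta0 Delta0).
Proof.
split=> [n x|n i x _|n i x _]; first by exists [:: tt]; split=> // -[].
all: by apply: functional_extensionality => -[]; rewrite /push fsum_unit.
Qed.

(* The degeneracy [s_0] is a bijection of singletons, so compatibility with it
   carries the value at level [n] to level [n+1] unchanged. *)
Lemma simplicial_fam_Delta0E (V : nmodType) (Phi : sfam V Delta0 Delta0) :
  simplicial_fam Phi -> forall n x y, Phi n x y = Phi 0%N tt tt.
Proof.
move=> [_ _ Phi_degen]; elim=> [|n IHn] [] [] //; rewrite -(IHn tt tt).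
by have /(congr1 (fun F => F tt)) := Phi_degen n 0%N tt (leq0n n); rewrite /push fsum_unit.
Qed.

Section CompletelyPositive.
Variable C : numClosedFieldType.
Local Notation L I := (Lop C I).
Local Notation ones := (fun _ _ => 1).

Lemma sum_unit_op (I : finType) (F : I -> I -> C) x y :
  \sum_a \sum_b @unit_op C I a b x y * F a b = F x y.
Proof.
rewrite (bigD1 x) //= [X in _ + X]big1 ?addr0; last first.
  by move=> a nax; apply: big1 => b _; rewrite /unit_op eq_sym (negbTE nax) mul0r.
rewrite (bigD1 y) //= [X in _ + X]big1 ?addr0; last first.
  by move=> b nby; rewrite /unit_op eq_sym (negbTE nby) andbF mul0r.
by rewrite /unit_op !eqxx mul1r.
Qed.

Lemma tens_map_idlE (k : nat) (J J' : finType) (f : L J -> L J') X p q :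
  tens_map (fun Y : L 'I_k => Y) f X p q = f (block X p.1 q.1) p.2 q.2.
Proof. by rewrite /tens_map /kron sum_unit_op. Qed.

Lemma tens_map_unitE (f g : L unit -> L unit) :
  tens_map f g ones (tt, tt) (tt, tt) = f ones tt tt * g ones tt tt.
Proof.
rewrite /tens_map /kron !sum_unit /=.
suff -> : @unit_op C unit tt tt = ones by [].
by apply: functional_extensionality => -[]; apply: functional_extensionality => -[].
Qed.

Lemma lin_op0 (I J : finType) (f : L I -> L J) : lin_op f -> f (fun _ _ => 0) = fun _ _ => 0.
Proof.
move=> f_lin; have := f_lin (-1) (fun _ _ => 0) (fun _ _ => 0).
have -> : (fun i j : I => -1 * 0 + 0) = (fun _ _ => 0 : C) by rewrite mulr0 addr0.
move=> ->; apply: functional_extensionality => i; apply: functional_extensionality => j.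
by rewrite mulN1r addNr.
Qed.

Lemma lin_op_unitE (J : finType) (f : L unit -> L J) :
  lin_op f -> forall A i j, f A i j = A tt tt * f ones i j.
Proof.
move=> f_lin A i j; have -> : A = fun k l => A tt tt * 1 + 0.
  by apply: functional_extensionality => -[]; apply: functional_extensionality => -[];
     rewrite mulr1 addr0.
by rewrite f_lin lin_op0 // addr0 mulr1 addr0.
Qed.

Lemma tens_map0l (I I' J J' : finType) (g : L J -> L J') :
  tens_map (0 : L I -> L I') g = 0.
Proof.
do 3 apply: functional_extensionality => ?.
by apply: big1 => a _; apply: big1 => b _; apply: mul0r.
Qed.

Lemma psd_ones (I : finType) : psd (ones : L I).
Proof.
move=> v; have -> : \sum_i \sum_j (v i)^* * 1 * v j = (\sum_i v i)^* * (\sum_j v j).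
  rewrite rmorph_sum mulr_suml; apply: eq_bigr => i _.
  by rewrite mulr_sumr; apply: eq_bigr => j _; rewrite mulr1.
by rewrite mulrC mul_conjC_ge0.
Qed.

Lemma cp_unit_ge0 (f : L unit -> L unit) : is_cp f -> 0 <= f ones tt tt.
Proof.
case=> _ /(_ 1%N ones (psd_ones (I := _))) /(_ (fun _ => 1)).
have entryE (i j : 'I_1 * unit) :
    (1 : C)^* * tens_map (fun Y : L 'I_1 => Y) f ones i j * 1 = f ones tt tt.
  by case: i j => [a []] [b []]; rewrite tens_map_idlE conjC1 mul1r mulr1.
under eq_bigr do under eq_bigr do rewrite entryE.
by rewrite !sumr_const card_prod card_ord card_unit !mulr1n.
Qed.

Lemma cp_scale (I : finType) (c : C) : 0 <= c -> is_cp (fun (A : L I) i j => c * A i j).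
Proof.
move=> c_ge0; split=> [a A B|k X X_psd v].
  by apply: functional_extensionality => i; apply: functional_extensionality => j;
     rewrite mulrDr mulrCA.
have entryE (i j : 'I_k * I) :
    (v i)^* * tens_map (fun Y : L 'I_k => Y) (fun (A : L I) i j => c * A i j) X i j * v j
    = c * ((v i)^* * X i j * v j).
  by case: i j => [i1 i2] [j1 j2]; rewrite tens_map_idlE mulrA [_ * c]mulrC -!mulrA.
under eq_bigr do under eq_bigr do rewrite entryE.
under eq_bigr do rewrite -mulr_sumr.
by rewrite -mulr_sumr mulr_ge0.
Qed.

End CompletelyPositive.

Section InstrumentsOnDelta0.
Variable C : numClosedFieldType.
Local Notation L I := (Lop C I).

Lemma const_sq_sinstr (V W : finType) (f : L V -> L W) : is_channel f -> sinstr (const_sq f).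
Proof.
move=> f_chan; split=> [|n x y|n x]; first exact: simplicial_fam_const_Delta0.
  exact: f_chan.1.
by rewrite fsum_unit.
Qed.

Lemma sinstr_Delta0 (V W : finType) (Phi : sfam (L V -> L W) Delta0 Delta0) :
  sinstr Phi -> is_channel (ev Phi) /\ forall n x y, Phi n x y = ev Phi.
Proof.
move=> [Phi_simp _ Phi_chan]; split; last exact: simplicial_fam_Delta0E.
by have := Phi_chan 0%N tt; rewrite fsum_unit.
Qed.

Lemma ev_vcomp (V1 W1 V2 W2 : finType)
    (Phi : sfam (L V1 -> L W1) Delta0 Delta0) (Psi : sfam (L V2 -> L W2) Delta0 Delta0) :
  ev (vcomp Phi Psi) = tens_map (ev Phi) (ev Psi).
Proof. by rewrite /ev /vcomp fsum_unit. Qed.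

End InstrumentsOnDelta0.

Section ComplexScalars.
Variable R : rcfType.
Local Notation L I := (Lop R[i] I).
Local Notation ones := (fun _ _ => 1).

Lemma Re_mul_real (a b : R[i]) :
  complex.Im a = 0 -> complex.Re (a * b) = complex.Re a * complex.Re b.
Proof. by case: a => a1 a2 /= ->; case: b => b1 b2 /=; rewrite mul0r subr0. Qed.

Lemma cp_unitE (f : L unit -> L unit) :
  is_cp f -> f = fun A i j => Complex (complex.Re (f ones tt tt)) 0 * A i j.
Proof.
move=> f_cp; have Im_f1 := ger0_Im (cp_unit_ge0 f_cp).
apply: functional_extensionality => A; do 2 apply: functional_extensionality => -[].
rewrite (lin_op_unitE f_cp.1) mulrC; congr (_ * _).
by move: Im_f1; case: (f ones tt tt) => a b /= ->.
Qed.

Lemma real_scale_morph (I : finType) :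
  nmod_morphism (fun c : R => (fun A i j => Complex c 0 * A i j) : L I -> L I).
Proof.
split=> [|a b]; do 3 apply: functional_extensionality => ?; first exact: mul0r.
rewrite /= -mulrDl; congr (_ * _).
by apply/eqP; rewrite eq_complex /= addr0 !eqxx.
Qed.

Lemma Re_eval_morph (I J : finType) (A : L I) (i j : J) :
  nmod_morphism (fun f : L I -> L J => complex.Re (f A i j)).
Proof.
split=> [|f g]; first reflexivity.
by rewrite !addrfctE /=; case: (f A i j) => ? ?; case: (g A i j).
Qed.

End ComplexScalars.

Section KleisliCorrespondence.
Variable R : realType.
Local Notation L I := (Lop R[i] I).
Local Notation ones := (fun _ _ => 1).

Lemma fromD_sinstr (X Y : sSet) (p : sfam R X Y) : kmap p -> sinstr (fromD p).
Proof.
move=> [p_simp p_ge0 p_sum]; have [p_fin _ _] := p_simp; split.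
- exact: simplicial_fam_morph (real_scale_morph R unit) p_simp.
- by move=> n x y; apply: cp_scale; rewrite lecE /= eqxx p_ge0.
- move=> n x; have -> : fsum (fromD p n x) = fun A i j => Complex 1 0 * A i j.
    by rewrite -(p_sum n x); exact: fsum_morph (real_scale_morph R unit) (p_fin n x).
  split=> [|A]; first by apply: cp_scale; rewrite lecE /= eqxx ler01.
  by rewrite /trace; apply: eq_bigr => i _; rewrite mul1r.
Qed.

Lemma toD_kmap (X Y : sSet) (Phi : sfam (L unit -> L unit) X Y) : sinstr Phi -> kmap (toD Phi).
Proof.
move=> [Phi_simp Phi_cp Phi_chan]; have [Phi_fin _ _] := Phi_simp; split.
- exact: simplicial_fam_morph (Re_eval_morph ones tt tt) Phi_simp.
- by move=> n x y; have := cp_unit_ge0 (Phi_cp n x y); rewrite lecE => /andP[].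
- move=> n x; rewrite /toD (fsum_morph (Re_eval_morph ones tt tt) (Phi_fin n x)).
  by have := (Phi_chan n x).2 ones; rewrite /trace !sum_unit => ->.
Qed.

Lemma fromD_toD (X Y : sSet) (Phi : sfam (L unit -> L unit) X Y) :
  sinstr Phi -> forall n x y, fromD (toD Phi) n x y = Phi n x y.
Proof. by move=> [_ Phi_cp _] n x y; rewrite [RHS](cp_unitE (Phi_cp n x y)). Qed.

Lemma toD_fromD (X Y : sSet) (p : sfam R X Y) n x y : toD (fromD p) n x y = p n x y.
Proof. by rewrite /toD /fromD mulr1. Qed.

Lemma toD_vid (X : sSet) n x y : toD (vid X) n x y = kid R X n x y.
Proof. by rewrite /toD /vid /kid; case: (x == y). Qed.

Lemma toD2_vcomp (X Y Z : sSet)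
    (Phi : sfam (L unit -> L unit) X Y) (Psi : sfam (L unit -> L unit) Y Z) :
  sinstr Phi -> sinstr Psi ->
  forall n x z, toD2 (vcomp Phi Psi) n x z = kcomp (toD Phi) (toD Psi) n x z.
Proof.
move=> [[Phi_fin _ _] Phi_cp _] [_ Psi_cp _] n x z.
have tens_fin : finsupp (fun y => tens_map (Phi n x y) (Psi n y z)).
  by apply: finsupp_sub (Phi_fin n x) _ => y ->; apply: tens_map0l.
rewrite /toD2 /vcomp -(fsum_morph (Re_eval_morph _ _ _) tens_fin).
congr fsum; apply: functional_extensionality => y.
by rewrite tens_map_unitE Re_mul_real // (ger0_Im (cp_unit_ge0 (Phi_cp n x y))).
Qed.

Lemma toD_hcomp (X1 Y1 X2 Y2 : sSet)
    (Phi : sfam (L unit -> L unit) X1 Y1) (Psi : sfam (L unit -> L unit) X2 Y2) :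
  sinstr Phi -> sinstr Psi ->
  forall n x y, toD (hcomp Phi Psi) n x y = ktens (toD Phi) (toD Psi) n x y.
Proof.
move=> [_ Phi_cp _] [_ Psi_cp _] n x y.
rewrite /toD /hcomp /= (lin_op_unitE (Psi_cp n x.2 y.2).1) Re_mul_real //.
exact: ger0_Im (cp_unit_ge0 (Phi_cp _ _ _)).
Qed.

End KleisliCorrespondence.

Theorem proposition6p5 (R : realType) :
  (* ---------- H(sInst) = Chan ---------- *)
  [/\ (* every channel gives a simplicial instrument Delta^0 -> CP_{V,W}(Delta^0) *)
      forall (V W : finType) (f : Lop R[i] V -> Lop R[i] W),
        is_channel f -> sinstr (const_sq f),
      (* every such instrument is the constant one at a channel *)
      forall (V W : finType) (Phi : sfam (Lop R[i] V -> Lop R[i] W) Delta0 Delta0),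
        sinstr Phi -> is_channel (ev Phi) /\ (forall n x y, Phi n x y = ev Phi),
      (* identities correspond *)
      forall (V : finType), ev (const_sq (fun A : Lop R[i] V => A)) = (fun A => A),
      (* horizontal composition corresponds to composition of channels *)
      forall (V W U : finType)
        (Phi : sfam (Lop R[i] V -> Lop R[i] W) Delta0 Delta0)
        (Psi : sfam (Lop R[i] W -> Lop R[i] U) Delta0 Delta0),
        sinstr Phi -> sinstr Psi -> ev2 (hcomp Phi Psi) = ev Psi \o ev Phi &
      (* vertical composition corresponds to the tensor product of channels *)
      forall (V1 W1 V2 W2 : finType)
        (Phi : sfam (Lop R[i] V1 -> Lop R[i] W1) Delta0 Delta0)
        (Psi : sfam (Lop R[i] V2 -> Lop R[i] W2) Delta0 Delta0),
        sinstr Phi -> sinstr Psi -> ev (vcomp Phi Psi) = tens_map (ev Phi) (ev Psi)]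
  /\
  (* ---------- V(sInst) = sSet_D ---------- *)
  [/\ [/\ (* every Kleisli map X -> D(Y) gives a simplicial instrument X -> CP_{C,C}(Y) *)
      forall (X Y : sSet) (p : sfam R X Y), kmap p -> sinstr (fromD p),
      (* every instrument X -> CP_{C,C}(Y) gives a Kleisli map, and is recovered *)
      forall (X Y : sSet) (Phi : sfam (Lop R[i] unit -> Lop R[i] unit) X Y),
        sinstr Phi -> kmap (toD Phi) /\ (forall n x y, fromD (toD Phi) n x y = Phi n x y)
      & forall (X Y : sSet) (p : sfam R X Y) n x y, toD (fromD p) n x y = p n x y],
      (* identities correspond *)
      forall (X : sSet) n x y, toD (vid X) n x y = kid R X n x y,
      (* vertical composition corresponds to Kleisli composition *)
      forall (X Y Z : sSet)
        (Phi : sfam (Lop R[i] unit -> Lop R[i] unit) X Y)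
        (Psi : sfam (Lop R[i] unit -> Lop R[i] unit) Y Z),
        sinstr Phi -> sinstr Psi ->
        forall n x z, toD2 (vcomp Phi Psi) n x z = kcomp (toD Phi) (toD Psi) n x z &
      (* horizontal composition corresponds to the product of simplicial sets *)
      forall (X1 Y1 X2 Y2 : sSet)
        (Phi : sfam (Lop R[i] unit -> Lop R[i] unit) X1 Y1)
        (Psi : sfam (Lop R[i] unit -> Lop R[i] unit) X2 Y2),
        sinstr Phi -> sinstr Psi ->
        forall n x y, toD (hcomp Phi Psi) n x y = ktens (toD Phi) (toD Psi) n x y].
Proof.
split; split.
- by move=> V W f; apply: const_sq_sinstr.
- by move=> V W Phi; apply: sinstr_Delta0.
- by [].
- by [].
- by move=> *; apply: ev_vcomp.
- split.
  + exact: fromD_sinstr.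
  + by move=> X Y Phi Phi_inst; split; [apply: toD_kmap | apply: fromD_toD].
  + exact: toD_fromD.
- exact: toD_vid.
- exact: toD2_vcomp.
- exact: toD_hcomp.
Qed.
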